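(* Let $K\ge 1$ and $1\le K^{*}\le K$ be integers. Let $\alpha_1,\dots,\alpha_K$ be independent random variables with $\alpha_k\sim\mathrm{Bernoulli}(p_k)$, $p_k\in(0,1)$ for $k=1,\dots,K$, and write $\boldsymbol{\alpha}=(\alpha_1,\dots,\alpha_K)$. Let $R\in\{0,1\}$ be a response generated from the GDINA model (identity link) for an item whose required attributes are exactly the first $K^{*}$ attributes (i.e. its $Q$-matrix row is $\mathbf{q}=(1,\dots,1,0,\dots,0)$ with $K^{*}$ ones): $$P(R=1\mid\boldsymbol{\alpha})=\delta_0+\sum_{k=1}^{K^{*}}\delta_k\alpha_k+\sum_{1\le k<k'\le K^{*}}\delta_{kk'}\alpha_k\alpha_{k'}+\dots+\delta_{12\cdots K^{*}}\prod_{k=1}^{K^{*}}\alpha_k\in[0,1],$$ and assume the monotonicity condition: for every $k\in\{1,\dots,K^{*}\}$ and every configuration of the other attributes, acquiring attribute $\alpha_k$ (changing $\alpha_k$ from $0$ to $1$) strictly increases $P(R=1\mid\boldsymbol{\alpha})$. Then the mis-specified linear additive model of $R$ regressed on $(\alpha_1,\dots,\alpha_K)$ has mean function $\mathbb{E}^{*}[R\mid\boldsymbol{\alpha}]=\beta_0+\beta_1\alpha_1+\dots+\beta_K\alpha_K$ with $\beta_l\neq 0$ for $l=1,\dots,K^{*}$ and $\beta_k=0$ for $k=K^{*}+1,\dots,K$.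
   Context: The mis-specified linear additive model's mean function $\mathbb{E}^{*}[R\mid\boldsymbol{\alpha}]$ denotes the population linear regression (least squares) mean function of $R$ on $\alpha_1,\dots,\alpha_K$ with an intercept, i.e. $\beta_0+\sum_{k=1}^K\beta_k\alpha_k$ where $(\beta_0,\dots,\beta_K)$ minimize $\mathbb{E}\big[(R-\beta_0-\sum_{k=1}^K\beta_k\alpha_k)^2\big]$ under the joint distribution of $(\boldsymbol{\alpha},R)$ described. In the GDINA model, the sum runs over the intercept, main effects and all interaction terms among the required attributes $\alpha_1,\dots,\alpha_{K^{*}}$ with real coefficients. *)

From mathcomp Require Import all_boot all_order all_algebra.
From mathcomp Require Import reals.
Set Implicit Arguments. Unset Strict Implicit. Unset Printing Implicit Defensive.
Import Order.TTheory GRing.Theory Num.Theory.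
Local Open Scope ring_scope.

Section Defs.
Variable R : realType.
Variable K : nat.

Definition attr := {ffun 'I_K -> bool}.

Definition prior (p : 'I_K -> R) (a : attr) : R :=
  \prod_(k < K) (if a k then p k else 1 - p k).

(* GDINA item response function (identity link) for the item whose
   required attributes are exactly the first Kstar attributes:
   sum over all subsets S of the required attributes of
   delta_S * prod_{k in S} alpha_k  (S = set0 gives the intercept delta_0). *)
Definition gdina (Kstar : nat) (delta : {set 'I_K} -> R) (a : attr) : R :=
  \sum_(S : {set 'I_K} | S \subset [set k : 'I_K | (val k < Kstar)%N])
     delta S * \prod_(k in S) (a k)%:R.

Definition acquire (a : attr) (k : 'I_K) : attr :=
  [ffun j => if j == k then true else a j].

Definition gdina_monotone (Kstar : nat) (f : attr -> R) : Prop :=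
  forall (k : 'I_K), (val k < Kstar)%N ->
  forall a : attr, a k = false -> f a < f (acquire a k).

Definition linpred (b0 : R) (b : 'I_K -> R) (a : attr) : R :=
  b0 + \sum_(k < K) b k * (a k)%:R.

(* E[(R - b0 - sum_k b_k alpha_k)^2] under the joint law of (alpha, R):
   P(alpha = a, R = 1) = prior a * f a, P(alpha = a, R = 0) = prior a * (1 - f a). *)
Definition sq_loss (p : 'I_K -> R) (f : attr -> R) (b0 : R) (b : 'I_K -> R) : R :=
  \sum_(a : attr) prior p a *
    (f a * (1 - linpred b0 b a) ^+ 2 + (1 - f a) * (0 - linpred b0 b a) ^+ 2).

Definition is_ls_min (p : 'I_K -> R) (f : attr -> R) (b0 : R) (b : 'I_K -> R) : Prop :=
  forall (c0 : R) (c : 'I_K -> R), sq_loss p f b0 b <= sq_loss p f c0 c.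

End Defs.

(* Centre the attributes, x_k := alpha_k - p_k.  By independence the x_k
   have mean 0 and are pairwise orthogonal with E[x_k^2] = p_k (1 - p_k), so
   the square loss of (b0, b) splits, Pythagoras-style, into a part that does
   not depend on the coefficients plus
     (E R - b0 - sum_k b_k p_k)^2 + sum_k p_k (1 - p_k) (c_k - b_k)^2,
   where c_k := Cov(R, alpha_k) / Var(alpha_k).  So the least-squares slopes
   are exactly the c_k.  Conditioning on the other attributes shows that c_k
   is the average effect E[f(alpha; alpha_k = 1) - f(alpha; alpha_k = 0)] of
   acquiring attribute k, where f is the item response function: positive for
   a required attribute by monotonicity, and zero for the others, on which
   the GDINA response function does not depend. *)

From mathcomp Require Import all_boot all_order all_algebra.
From mathcomp Require Import reals ring lra.
Import Order.TTheory GRing.Theory Num.Theory.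
Set Implicit Arguments. Unset Strict Implicit. Unset Printing Implicit Defensive.
Local Open Scope ring_scope.

Section SetAttr.
Variable K : nat.

Definition set_attr (a : attr K) (k : 'I_K) (c : bool) : attr K :=
  [ffun j => if j == k then c else a j].

Lemma set_attr_at a k c : set_attr a k c k = c.
Proof. by rewrite ffunE eqxx. Qed.

Lemma set_attr_other a k c j : j != k -> set_attr a k c j = a j.
Proof. by rewrite ffunE => /negbTE ->. Qed.

Lemma set_attr_id a k : set_attr a k (a k) = a.
Proof. by apply/ffunP => j; rewrite ffunE; case: eqP => // ->. Qed.

Lemma set_attrK a k c d : set_attr (set_attr a k c) k d = set_attr a k d.
Proof. by apply/ffunP => j; rewrite !ffunE; case: eqP. Qed.

Lemma acquireE a k : acquire a k = set_attr a k true.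
Proof. by apply/ffunP => j; rewrite !ffunE. Qed.

Lemma sum_attr_pair (V : nmodType) k (F : attr K -> V) :
  \sum_a F a = \sum_(a : attr K | a k) (F a + F (set_attr a k false)).
Proof.
pose flip (a : attr K) := set_attr a k (~~ a k).
have flipK : involutive flip.
  by move=> a; rewrite /flip set_attrK set_attr_at negbK set_attr_id.
rewrite big_split /= (bigID (fun a : attr K => a k)) /=; congr (_ + _).
rewrite (reindex_inj (can_inj flipK)) /=.
apply: eq_big => [a|a ak]; first by rewrite /flip set_attr_at negbK.
by move: ak; rewrite /flip set_attr_at negbK => ->.
Qed.

End SetAttr.

Section Expectation.
Variables (R : realType) (K : nat) (p : 'I_K -> R).

Definition expect (h : attr K -> R) : R := \sum_a prior p a * h a.

Lemma eq_expect h1 h2 : h1 =1 h2 -> expect h1 = expect h2.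
Proof. by move=> h12; apply: eq_bigr => a _; rewrite h12. Qed.

Lemma expectD h1 h2 : expect (fun a => h1 a + h2 a) = expect h1 + expect h2.
Proof. by rewrite /expect -big_split; apply: eq_bigr => a _; rewrite mulrDr. Qed.

Lemma expectZ c h : expect (fun a => c * h a) = c * expect h.
Proof. by rewrite /expect mulr_sumr; apply: eq_bigr => a _; rewrite mulrCA. Qed.

Lemma expect_sum (I : finType) (h : I -> attr K -> R) :
  expect (fun a => \sum_i h i a) = \sum_i expect (h i).
Proof.
rewrite /expect; under eq_bigr do rewrite mulr_sumr.
exact: exchange_big.
Qed.

Lemma prior_sum1 : \sum_a prior p a = 1.
Proof.
rewrite /prior -(bigA_distr_bigA (fun k (c : bool) => if c then p k else 1 - p k)) /=.
by apply: big1 => k _; rewrite big_bool /= addrC subrK.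
Qed.

Lemma expect_cst c : expect (fun _ => c) = c.
Proof. by rewrite /expect -mulr_suml prior_sum1 mul1r. Qed.

Lemma expect_set_attr k h : expect h =
  expect (fun a => p k * h (set_attr a k true) + (1 - p k) * h (set_attr a k false)).
Proof.
pose r a := \prod_(j | j != k) (if a j then p j else 1 - p j).
have priorE a : prior p a = (if a k then p k else 1 - p k) * r a.
  by rewrite /prior (bigD1 k).
have r_set a c : r (set_attr a k c) = r a.
  by apply: eq_bigr => j jk; rewrite set_attr_other.
rewrite /expect !(sum_attr_pair k); apply: eq_bigr => a ak.
have a1 : set_attr a k true = a by rewrite -[in RHS](set_attr_id a k) ak.
rewrite !set_attrK a1 !priorE r_set set_attr_at ak /=; ring.
Qed.

Definition centered k (a : attr K) : R := (a k)%:R - p k.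

Definition var_attr k : R := p k * (1 - p k).

Lemma expect_centered k : expect (centered k) = 0.
Proof.
rewrite (expect_set_attr k) -[RHS](expect_cst 0); apply: eq_expect => a.
rewrite /centered !set_attr_at /=; ring.
Qed.

Lemma expect_centered_mul j k :
  expect (fun a => centered j a * centered k a) = if j == k then var_attr k else 0.
Proof.
rewrite (expect_set_attr k) /centered; case: eqP => [->|/eqP jk].
  rewrite -[RHS](expect_cst (var_attr k)); apply: eq_expect => a.
  by rewrite !set_attr_at /var_attr /=; ring.
rewrite -[RHS](expect_cst 0); apply: eq_expect => a.
by rewrite !set_attr_at !set_attr_other //=; ring.
Qed.

Lemma expect_lin_centered_sqr (e : 'I_K -> R) :
  expect (fun a => (\sum_k e k * centered k a) ^+ 2) = \sum_k e k ^+ 2 * var_attr k.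
Proof.
transitivity (expect (fun a =>
    \sum_j \sum_k e j * e k * (centered j a * centered k a))).
  apply: eq_expect => a; rewrite expr2 mulr_suml; apply: eq_bigr => j _.
  by rewrite mulr_sumr; apply: eq_bigr => k _; ring.
rewrite expect_sum; apply: eq_bigr => j _.
rewrite expect_sum (bigD1 j) //= big1 => [|k kj]; last first.
  by rewrite expectZ expect_centered_mul eq_sym (negbTE kj) mulr0.
by rewrite expectZ expect_centered_mul eqxx addr0 expr2.
Qed.

Lemma expect_orth_sqr g d (e : 'I_K -> R) :
  expect g = 0 -> (forall k, expect (fun a => g a * centered k a) = 0) ->
  expect (fun a => (g a + d + \sum_k e k * centered k a) ^+ 2)
  = expect (fun a => g a ^+ 2) + d ^+ 2 + \sum_k e k ^+ 2 * var_attr k.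
Proof.
move=> g0 g_orth.
transitivity (expect (fun a => g a ^+ 2 + d ^+ 2 * 1
    + (\sum_k e k * centered k a) ^+ 2 + (2 * d) * g a
    + 2 * (\sum_k e k * (g a * centered k a))
    + (2 * d) * (\sum_k e k * centered k a))).
  apply: eq_expect => a.
  have -> : \sum_k e k * (g a * centered k a) = g a * \sum_k e k * centered k a.
    by rewrite mulr_sumr; apply: eq_bigr => k _; rewrite mulrCA.
  ring.
have centered_part : \sum_k expect (fun a => e k * centered k a) = 0.
  by apply: big1 => k _; rewrite expectZ expect_centered mulr0.
have cross_part : \sum_k expect (fun a => e k * (g a * centered k a)) = 0.
  by apply: big1 => k _; rewrite expectZ g_orth mulr0.
rewrite !expectD !expectZ expect_cst expect_lin_centered_sqr g0 !expect_sum.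
rewrite centered_part cross_part; ring.
Qed.

Hypothesis p_in01 : forall k, 0 < p k < 1.

Lemma var_attr_gt0 k : 0 < var_attr k.
Proof. by have /andP[p0 p1] := p_in01 k; rewrite mulr_gt0 // subr_gt0. Qed.

Lemma prior_gt0 a : 0 < prior p a.
Proof.
apply: prodr_gt0 => k _; have /andP[p0 p1] := p_in01 k.
by case: (a k); rewrite // subr_gt0.
Qed.

Lemma expect_gt0 h : (forall a, 0 < h a) -> 0 < expect h.
Proof.
move=> h_gt0; rewrite /expect (bigD1 [ffun=> false]) //=.
rewrite ltr_wpDr ?mulr_gt0 ?prior_gt0 // sumr_ge0 // => a _.
by rewrite ltW ?mulr_gt0 ?prior_gt0.
Qed.

End Expectation.

Section LeastSquares.
Variables (R : realType) (K : nat) (p : 'I_K -> R) (f : attr K -> R).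
Hypothesis p_in01 : forall k, 0 < p k < 1.

Definition cov_attr k : R := expect p (fun a => f a * centered p k a).

Definition ls_coef k : R := cov_attr k / var_attr p k.

Definition ls_intercept : R := expect p f - \sum_k ls_coef k * p k.

Definition ls_residual a : R :=
  f a - expect p f - \sum_k ls_coef k * centered p k a.

Lemma cov_attrE k : cov_attr k = ls_coef k * var_attr p k.
Proof. by rewrite /ls_coef divfK // gt_eqF // var_attr_gt0. Qed.

Lemma expect_ls_residual : expect p ls_residual = 0.
Proof.
transitivity (expect p (fun a => f a + (- expect p f) * 1
    + (-1) * \sum_k ls_coef k * centered p k a)).
  by apply: eq_expect => a; rewrite /ls_residual; ring.
rewrite !expectD !expectZ expect_cst expect_sum big1 => [|k _]; first by ring.
by rewrite expectZ expect_centered mulr0.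
Qed.

Lemma expect_ls_residual_centered k :
  expect p (fun a => ls_residual a * centered p k a) = 0.
Proof.
transitivity (expect p (fun a => f a * centered p k a
    + (- expect p f) * centered p k a
    + (-1) * \sum_j ls_coef j * (centered p j a * centered p k a))).
  apply: eq_expect => a; rewrite /ls_residual.
  have -> : \sum_j ls_coef j * (centered p j a * centered p k a)
      = (\sum_j ls_coef j * centered p j a) * centered p k a.
    by rewrite mulr_suml; apply: eq_bigr => j _; rewrite mulrA.
  ring.
rewrite !expectD !expectZ expect_centered expect_sum (bigD1 k) //= big1 => [|j jk].
  by rewrite expectZ expect_centered_mul eqxx -cov_attrE /cov_attr; ring.
by rewrite expectZ expect_centered_mul (negbTE jk) mulr0.
Qed.

Lemma linpred_centered b0 b a :
  linpred b0 b a = b0 + \sum_k b k * p k + \sum_k b k * centered p k a.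
Proof.
rewrite /linpred -addrA -big_split /=; congr (_ + _).
by apply: eq_bigr => k _; rewrite /centered; ring.
Qed.

Lemma sq_lossE b0 b :
  sq_loss p f b0 b =
    expect p (fun a => ls_residual a ^+ 2 + f a * (1 - f a))
    + (expect p f - (b0 + \sum_k b k * p k)) ^+ 2
    + \sum_k (ls_coef k - b k) ^+ 2 * var_attr p k.
Proof.
set c := b0 + \sum_k b k * p k.
have err a : f a - linpred b0 b a = ls_residual a + (expect p f - c)
    + \sum_k (ls_coef k - b k) * centered p k a.
  rewrite linpred_centered /ls_residual -/c.
  have -> : \sum_k (ls_coef k - b k) * centered p k a
      = \sum_k ls_coef k * centered p k a - \sum_k b k * centered p k a.
    by rewrite -sumrB; apply: eq_bigr => k _; rewrite mulrBl.
  ring.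
(* f (1 - L)^2 + (1 - f) L^2 = (f - L)^2 + f (1 - f) *)
transitivity (expect p (fun a => (f a - linpred b0 b a) ^+ 2 + f a * (1 - f a))).
  by apply: eq_expect => a; ring.
under eq_expect do rewrite err.
rewrite expectD expect_orth_sqr ?expect_ls_residual //.
  by rewrite expectD; ring.
exact: expect_ls_residual_centered.
Qed.

Lemma sq_loss_ls_coef : sq_loss p f ls_intercept ls_coef =
  expect p (fun a => ls_residual a ^+ 2 + f a * (1 - f a)).
Proof.
rewrite sq_lossE /ls_intercept subrK subrr expr0n addr0 big1 ?addr0 // => k _.
by rewrite subrr expr0n mul0r.
Qed.

Lemma ls_coef_is_ls_min : is_ls_min p f ls_intercept ls_coef.
Proof.
move=> c0 c; rewrite sq_loss_ls_coef sq_lossE -addrA lerDl.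
rewrite addr_ge0 ?sqr_ge0 // sumr_ge0 // => k _.
by rewrite mulr_ge0 ?sqr_ge0 // ltW ?var_attr_gt0.
Qed.

Lemma is_ls_min_coef b0 b : is_ls_min p f b0 b -> b =1 ls_coef.
Proof.
move=> b_min k.
have term_ge0 j : 0 <= (ls_coef j - b j) ^+ 2 * var_attr p j.
  by rewrite mulr_ge0 ?sqr_ge0 // ltW ?var_attr_gt0.
have sum_le0 : \sum_j (ls_coef j - b j) ^+ 2 * var_attr p j <= 0.
  have := b_min ls_intercept ls_coef; rewrite sq_loss_ls_coef sq_lossE -addrA gerDl.
  by have := sqr_ge0 (expect p f - (b0 + \sum_j b j * p j)); lra.
have sum_eq0 : \sum_j (ls_coef j - b j) ^+ 2 * var_attr p j = 0.
  by apply/eqP; rewrite eq_le sum_le0 sumr_ge0.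
move/eqP: (psumr_eq0P (fun j _ => term_ge0 j) sum_eq0 (i := k) isT).
by rewrite mulf_eq0 (gt_eqF (var_attr_gt0 _ _)) // orbF sqrf_eq0 subr_eq0 => /eqP.
Qed.

Lemma ls_coef_avg_effect k :
  ls_coef k = expect p (fun a => f (set_attr a k true) - f (set_attr a k false)).
Proof.
apply: (mulIf (lt0r_neq0 (var_attr_gt0 p_in01 k))); rewrite -cov_attrE /cov_attr.
rewrite (expect_set_attr p k) mulrC -expectZ; apply: eq_expect => a.
by rewrite /centered /var_attr !set_attr_at /=; ring.
Qed.

Lemma ls_coef_gt0 k :
  (forall a, f (set_attr a k false) < f (set_attr a k true)) -> 0 < ls_coef k.
Proof.
by move=> f_incr; rewrite ls_coef_avg_effect expect_gt0 // => a; rewrite subr_gt0.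
Qed.

Lemma ls_coef_eq0 k : (forall a c, f (set_attr a k c) = f a) -> ls_coef k = 0.
Proof.
move=> f_indep; rewrite ls_coef_avg_effect -[RHS](expect_cst p 0).
by apply: eq_expect => a; rewrite !f_indep subrr.
Qed.

End LeastSquares.

Lemma gdina_set_attr (R : realType) (K Kstar : nat) (delta : {set 'I_K} -> R)
    a k c : (Kstar <= val k)%N ->
  gdina Kstar delta (set_attr a k c) = gdina Kstar delta a.
Proof.
move=> k_free; apply: eq_bigr => S S_req; congr (_ * _).
apply: eq_bigr => i iS; rewrite set_attr_other //.
have := subsetP S_req i iS; rewrite inE => i_req.
by apply: contraTneq i_req => ->; rewrite -leqNgt.
Qed.

Theorem proposition2 (R : realType) (K Kstar : nat)
  (p : 'I_K -> R) (delta : {set 'I_K} -> R) :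
  (1 <= K)%N -> (1 <= Kstar <= K)%N ->
  (forall k, 0 < p k < 1) ->
  (forall a : attr K, 0 <= gdina Kstar delta a <= 1) ->
  gdina_monotone Kstar (gdina Kstar delta) ->
  (exists (b0 : R) (b : 'I_K -> R), is_ls_min p (gdina Kstar delta) b0 b) /\
  (forall (b0 : R) (b : 'I_K -> R), is_ls_min p (gdina Kstar delta) b0 b ->
     (forall l : 'I_K, (val l < Kstar)%N -> b l != 0) /\
     (forall k : 'I_K, (Kstar <= val k)%N -> b k = 0)).
Proof.
move=> _ _ p_in01 _ monotone; set f := gdina Kstar delta.
split; first by exists (ls_intercept p f), (ls_coef p f); exact: ls_coef_is_ls_min.
move=> b0 b /(is_ls_min_coef p_in01) b_coef; split=> k k_range; rewrite b_coef.
  apply/lt0r_neq0/ls_coef_gt0 => // a.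
  by rewrite -[X in _ < f X](set_attrK a k false) -acquireE monotone ?set_attr_at.
by apply: ls_coef_eq0 => // a c; exact: gdina_set_attr.
Qed.
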